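(* Let $n\ge2$ be an integer, $l_k=\pi k/n$, $S_n=\sum_{k=1}^{n-1}\csc l_k$, $c_k=\cos\frac{\pi(2k-1)}{2n}$, $\sigma_k(\phi)=(1-c_k^2\cos^2\phi)^{1/2}$, and $V(\phi)=\frac{S_n}{4\cos\phi}+\frac14\sum_{k=1}^n\frac{1}{\sigma_k(\phi)}$ for $\phi\in(-\pi/2,\pi/2)$. Then $V$ has exactly three critical points in $(-\pi/2,\pi/2)$, all non-degenerate; they are $-\phi_R,0,\phi_R$ with $\phi_R\in(0,\pi/4)$.
   Context: $V$ is the shape potential, in Devaney-type coordinates $(q_1,q_2)=r(\cos\phi,2\sin\phi)$, of the spatial double-polygon problem ($2n$ unit masses forming two congruent regular $n$-gons in parallel horizontal planes, centered on the $z$-axis and twisted relative to each other). *)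

From Stdlib Require Import Reals Lra.
From Coquelicot Require Import Coquelicot.
Open Scope R_scope.

Definition lk (n k : nat) : R := PI * INR k / INR n.

Definition Sn (n : nat) : R := sum_n_m (fun k => / sin (lk n k)) 1 (n - 1).

Definition ck (n k : nat) : R := cos (PI * (2 * INR k - 1) / (2 * INR n)).

Definition sigmak (n k : nat) (phi : R) : R := sqrt (1 - (ck n k)^2 * (cos phi)^2).

Definition V (n : nat) (phi : R) : R :=
  Sn n / (4 * cos phi) + / 4 * sum_n_m (fun k => / sigmak n k phi) 1 n.

Definition critical_point (f : R -> R) (phi : R) : Prop := is_derive f phi 0.

Definition nondegenerate (f : R -> R) (phi : R) : Prop :=
  exists l : R, is_derive (Derive f) phi l /\ l <> 0.

(* Put K := (S_n / cos^2 - cos * sum_k c_k^2 / sigma_k^3) / 4.  Then V' = sin * K and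
   K' = sin * M with M > 0 on (-pi/2, pi/2), so K is even and strictly increasing on
   (0, pi/2).  Since K(0) < 0 < K(pi/4), K has exactly one root phi_R in (0, pi/4) and the
   critical points of V are 0 and +-phi_R; there V'' = cos * K + sin^2 * M is K(0) < 0,
   resp. sin^2 * M > 0.  K(0) < 0 compares S_n <= (n - 1) / sin(pi/n) with the k = 1 term
   of the sum; K(pi/4) > 0 uses S_n >= n - 1 and sum_k c_k^2 = n/2. *)

From Stdlib Require Import Reals Lra Lia.
From Coquelicot Require Import Coquelicot.
Open Scope R_scope.

Lemma sum_n_m_le_loc (f g : nat -> R) (m p : nat) :
  (forall k, (m <= k <= p)%nat -> f k <= g k) -> sum_n_m f m p <= sum_n_m g m p.
Proof.
  intros H.
  rewrite (sum_n_m_ext_loc f (fun k => Rmin (f k) (g k))).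
  - apply sum_n_m_le. intros k. apply Rmin_r.
  - intros k hk. symmetry. apply Rmin_left, H, hk.
Qed.

Lemma sum_n_m_lt_loc (f g : nat -> R) (m p : nat) : (m <= p)%nat ->
  (forall k, (m <= k <= p)%nat -> f k <= g k) -> f m < g m -> sum_n_m f m p < sum_n_m g m p.
Proof.
  intros hmp H hm. rewrite !(sum_Sn_m _ m p) by exact hmp.
  apply Rplus_lt_le_compat; [exact hm|].
  apply sum_n_m_le_loc. intros k hk. apply H. lia.
Qed.

Lemma sum_n_m_nonneg (f : nat -> R) (m p : nat) :
  (forall k, (m <= k <= p)%nat -> 0 <= f k) -> 0 <= sum_n_m f m p.
Proof.
  intros H. apply Rle_trans with (sum_n_m (fun _ => 0) m p).
  - rewrite sum_n_m_const. lra.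
  - now apply sum_n_m_le_loc.
Qed.

Lemma is_derive_sum_n_m (f : nat -> R -> R) (df : nat -> R) (m p : nat) (x : R) :
  (forall k, (m <= k <= p)%nat -> is_derive (f k) x (df k)) ->
  is_derive (fun y => sum_n_m (fun k => f k y) m p) x (sum_n_m df m p).
Proof.
  assert (empty : forall q, (q < m)%nat ->
    is_derive (fun y => sum_n_m (fun k => f k y) m q) x (sum_n_m df m q)).
  { intros q hq. rewrite sum_n_m_zero by exact hq.
    apply (is_derive_ext (fun _ => 0)).
    - intros t. now rewrite sum_n_m_zero.
    - apply (@is_derive_const R_AbsRing R_NormedModule). }
  induction p as [|p IH]; intros H.
  - destruct m as [|m]; [|apply empty; lia].
    rewrite sum_n_n. apply (is_derive_ext (f 0%nat)); [intros t; now rewrite sum_n_n|].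
    apply H. lia.
  - destruct (Compare_dec.le_lt_dec m (S p)) as [hm|hm]; [|now apply empty].
    rewrite sum_n_Sm by exact hm.
    apply (is_derive_ext (fun y => sum_n_m (fun k => f k y) m p + f (S p) y)).
    { intros t. now rewrite sum_n_Sm. }
    apply (@is_derive_plus R_AbsRing R_NormedModule).
    + apply IH. intros k hk. apply H. lia.
    + apply H. lia.
Qed.

Lemma sum_cos_odd_multiples (x : R) (n : nat) :
  2 * sin x * sum_n_m (fun k => cos ((2 * INR k - 1) * x)) 1 n = sin (2 * INR n * x).
Proof.
  induction n as [|n IH].
  - rewrite sum_n_m_zero by lia. simpl INR.
    replace (2 * 0 * x) with 0 by ring. rewrite sin_0. apply Rmult_0_r.
  - rewrite sum_n_Sm by lia. change plus with Rplus.
    rewrite Rmult_plus_distr_l, IH, S_INR.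
    replace (2 * INR n * x) with ((2 * INR n + 1) * x - x) by ring.
    replace (2 * (INR n + 1) * x) with ((2 * INR n + 1) * x + x) by ring.
    replace ((2 * (INR n + 1) - 1) * x) with ((2 * INR n + 1) * x) by ring.
    rewrite sin_plus, sin_minus. ring.
Qed.

(* Otherwise sin 3.2 >= 0, contradicting the degree-9 Taylor upper bound of sin at 3.2. *)
Lemma PI_lt_32_10 : PI < 32 / 10.
Proof.
  destruct (Rlt_or_le PI (32 / 10)) as [h|h]; [exact h|]. exfalso.
  pose proof (SIN (32 / 10) ltac:(lra) h) as [_ hs].
  pose proof (sin_ge_0 (32 / 10) ltac:(lra) h).
  unfold sin_ub, sin_approx in hs. simpl in hs. unfold sum_f_R0 in hs. simpl in hs.
  unfold sin_term in hs. cbn [Nat.mul Nat.add] in hs.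
  rewrite !fact_simpl, !mult_INR in hs. simpl Factorial.fact in hs. simpl INR in hs.
  cbn [pow] in hs. lra.
Qed.

Lemma sin_eq_0_lt_PI2 x : - (PI / 2) < x < PI / 2 -> sin x = 0 -> x = 0.
Proof.
  intros hx e. destruct (Rtotal_order x 0) as [c|[c|c]]; [|exact c|].
  - pose proof (sin_lt_0_var x ltac:(lra) c). lra.
  - pose proof (sin_gt_0 x c ltac:(lra)). lra.
Qed.

Section SinFactoredDerivative.

Variables f K M : R -> R.
Hypothesis f_deriv : forall x, - (PI / 2) < x < PI / 2 -> is_derive f x (sin x * K x).
Hypothesis K_deriv : forall x, - (PI / 2) < x < PI / 2 -> is_derive K x (sin x * M x).
Hypothesis M_pos : forall x, - (PI / 2) < x < PI / 2 -> 0 < M x.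
Hypothesis K_even : forall x, K (- x) = K x.

Lemma K_continuous x : - (PI / 2) < x < PI / 2 -> continuity_pt K x.
Proof.
  intros hx. apply continuity_pt_filterlim.
  apply (@ex_derive_continuous R_AbsRing R_NormedModule).
  exists (sin x * M x). now apply K_deriv.
Qed.

Lemma K_increasing x y : 0 < x -> x < y -> y < PI / 2 -> K x < K y.
Proof.
  intros hx hxy hy.
  destruct (MVT_gen K x y (fun t => sin t * M t)) as [c [hc e]];
    rewrite ?Rmin_left, ?Rmax_right in * by lra.
  - intros t ht. apply K_deriv. lra.
  - intros t ht. apply K_continuous. lra.
  - assert (0 < sin c) by (apply sin_gt_0; lra).
    assert (0 < M c) by (apply M_pos; lra).
    assert (0 < sin c * M c * (y - x)) by (repeat apply Rmult_lt_0_compat; lra).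
    lra.
Qed.

Lemma K_root_unique y z : 0 < y < PI / 2 -> 0 < z < PI / 2 -> K y = 0 -> K z = 0 -> y = z.
Proof.
  intros hy hz ey ez. destruct (Rtotal_order y z) as [c|[c|c]]; [|exact c|].
  - pose proof (K_increasing y z ltac:(lra) c ltac:(lra)). lra.
  - pose proof (K_increasing z y ltac:(lra) c ltac:(lra)). lra.
Qed.

Lemma critical_point_iff x : - (PI / 2) < x < PI / 2 ->
  critical_point f x <-> x = 0 \/ K x = 0.
Proof.
  intros hx. unfold critical_point. split.
  - intros h0. pose proof (is_derive_unique _ _ _ h0) as e.
    rewrite (is_derive_unique _ _ _ (f_deriv x hx)) in e.
    destruct (Rmult_integral _ _ e) as [es|eK]; [left|right; exact eK].
    now apply sin_eq_0_lt_PI2.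
  - intros he. replace 0 with (sin x * K x); [now apply f_deriv|].
    destruct he as [e|e]; rewrite e; [rewrite sin_0|]; ring.
Qed.

Lemma is_derive_Derive_f x : - (PI / 2) < x < PI / 2 ->
  is_derive (Derive f) x (cos x * K x + sin x ^ 2 * M x).
Proof.
  intros hx. apply (is_derive_ext_loc (fun y => sin y * K y)).
  - apply (locally_interval _ x (- (PI / 2)) (PI / 2)); simpl; try lra.
    intros y hy1 hy2. symmetry. apply is_derive_unique, f_deriv. lra.
  - replace (sin x ^ 2 * M x) with (sin x * (sin x * M x)) by ring.
    exact (Derive.is_derive_mult _ _ _ _ _ (is_derive_sin x) (K_deriv x hx)).
Qed.

Lemma nondegenerate_0 : K 0 <> 0 -> nondegenerate f 0.
Proof.
  intros hK. eexists. split.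
  - apply is_derive_Derive_f. pose proof PI_RGT_0. lra.
  - rewrite cos_0, sin_0. contradict hK. lra.
Qed.

Lemma nondegenerate_of_K_root x : - (PI / 2) < x < PI / 2 -> x <> 0 -> K x = 0 ->
  nondegenerate f x.
Proof.
  intros hx hx0 hK. eexists. split; [now apply is_derive_Derive_f|].
  rewrite hK. assert (sin x <> 0) by (intro e; now apply hx0, sin_eq_0_lt_PI2).
  pose proof (M_pos x hx). assert (0 < sin x ^ 2) by (apply pow2_gt_0; assumption). nra.
Qed.

Theorem three_nondegenerate_critical_points b : 0 < b < PI / 2 -> K 0 < 0 -> 0 < K b ->
  exists phiR : R,
    0 < phiR < b /\
    (forall phi : R, - (PI / 2) < phi < PI / 2 ->
       (critical_point f phi <-> (phi = - phiR \/ phi = 0 \/ phi = phiR))) /\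
    nondegenerate f (- phiR) /\ nondegenerate f 0 /\ nondegenerate f phiR.
Proof.
  intros hb hK0 hKb.
  destruct (Ranalysis5.IVT_interv K 0 b) as [z [hz hKz]]; try lra.
  { intros x hx. apply K_continuous. lra. }
  assert (z <> 0) by (intros ->; lra).
  assert (z <> b) by (intros ->; lra).
  assert (hzb : 0 < z < b) by lra.
  exists z. split; [exact hzb|]. split; [|repeat split].
  - intros phi hphi. rewrite critical_point_iff by exact hphi. split.
    + intros [e|e]; [now right; left|].
      destruct (Rtotal_order phi 0) as [c|[c|c]].
      * left. enough (- phi = z) by lra.
        apply K_root_unique; try lra. now rewrite K_even.
      * now right; left.
      * right; right. apply K_root_unique; lra.
    + intros [e|[e|e]]; [right|left|right]; subst phi; rewrite ?K_even; easy.
  - apply nondegenerate_of_K_root; [lra|lra|now rewrite K_even].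
  - apply nondegenerate_0. lra.
  - apply nondegenerate_of_K_root; lra.
Qed.

End SinFactoredDerivative.

Lemma INR_ge_2 n : (2 <= n)%nat -> 2 <= INR n.
Proof. intros h. apply (le_INR 2) in h. simpl in h. lra. Qed.

Lemma ck_angle_bounds n k : (1 <= k <= n)%nat ->
  0 < PI * (2 * INR k - 1) / (2 * INR n) < PI.
Proof.
  intros [h1 h2]. apply (le_INR 1) in h1. apply le_INR in h2. simpl in h1.
  pose proof PI_RGT_0. split.
  - apply Rdiv_lt_0_compat; nra.
  - apply Rmult_lt_reg_r with (2 * INR n); [lra|]. field_simplify; nra.
Qed.

Lemma sigmak_radicand_pos n k y : (1 <= k <= n)%nat -> 0 < 1 - ck n k ^ 2 * cos y ^ 2.
Proof.
  intros hk. destruct (ck_angle_bounds n k hk) as [h1 h2].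
  pose proof (sin_gt_0 _ h1 h2) as hs.
  pose proof (sin2_cos2 (PI * (2 * INR k - 1) / (2 * INR n))) as e.
  pose proof (sin2_cos2 y) as ey. unfold Rsqr in e, ey. unfold ck.
  assert (0 <= sin y ^ 2) by apply pow2_ge_0. nra.
Qed.

Lemma sigmak_pos n k y : (1 <= k <= n)%nat -> 0 < sigmak n k y.
Proof. intros hk. apply sqrt_lt_R0, sigmak_radicand_pos, hk. Qed.

Lemma is_derive_inv_sigmak n k x : (1 <= k <= n)%nat ->
  is_derive (fun y => / sigmak n k y) x (- (cos x * sin x) * (ck n k ^ 2 / sigmak n k x ^ 3)).
Proof.
  intros hk. pose proof (sigmak_radicand_pos n k x hk). pose proof (sigmak_pos n k x hk).
  unfold sigmak in *. auto_derive;
    replace (1 + - (ck n k * (ck n k * 1) * (cos x * (cos x * 1))))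
      with (1 - ck n k ^ 2 * cos x ^ 2) by ring;
    set (s := sqrt _) in *.
  - repeat split; lra.
  - field. lra.
Qed.

Lemma is_derive_ck2_div_sigmak3 n k x : (1 <= k <= n)%nat ->
  is_derive (fun y => ck n k ^ 2 / sigmak n k y ^ 3) x
    (- (3 * cos x * sin x) * (ck n k ^ 4 / sigmak n k x ^ 5)).
Proof.
  intros hk. pose proof (sigmak_radicand_pos n k x hk). pose proof (sigmak_pos n k x hk).
  unfold sigmak in *. auto_derive;
    replace (1 + - (ck n k * (ck n k * 1) * (cos x * (cos x * 1))))
      with (1 - ck n k ^ 2 * cos x ^ 2) by ring;
    set (s := sqrt _) in *.
  - repeat split; [lra|]. apply Rgt_not_eq. repeat apply Rmult_lt_0_compat; lra.
  - field. lra.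
Qed.

Definition Q (n : nat) (y : R) : R := sum_n_m (fun k => ck n k ^ 2 / sigmak n k y ^ 3) 1 n.
Definition P (n : nat) (y : R) : R := sum_n_m (fun k => ck n k ^ 4 / sigmak n k y ^ 5) 1 n.
Definition K (n : nat) (y : R) : R := / 4 * (Sn n / cos y ^ 2 - cos y * Q n y).
Definition M (n : nat) (y : R) : R :=
  / 4 * (2 * Sn n / cos y ^ 3 + Q n y + 3 * cos y ^ 2 * P n y).

Lemma V_deriv n x : - (PI / 2) < x < PI / 2 -> is_derive (V n) x (sin x * K n x).
Proof.
  intros hx. pose proof (cos_gt_0 x (proj1 hx) (proj2 hx)).
  assert (hS : is_derive (fun y => Sn n / (4 * cos y)) x (Sn n * sin x / (4 * cos x ^ 2))).
  { auto_derive; [lra|]. field. lra. }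
  assert (hsum := is_derive_sum_n_m _ _ 1 n x (fun k hk => is_derive_inv_sigmak n k x hk)).
  replace (sin x * K n x) with (Sn n * sin x / (4 * cos x ^ 2) + / 4 *
    sum_n_m (fun k => - (cos x * sin x) * (ck n k ^ 2 / sigmak n k x ^ 3)) 1 n).
  - apply (@is_derive_plus R_AbsRing R_NormedModule); [exact hS|].
    apply (is_derive_scal _ _ (/ 4)). exact hsum.
  - rewrite (sum_n_m_mult_l (K := R_Ring)). unfold K, Q. change mult with Rmult.
    set (q := sum_n_m _ 1 n). field. lra.
Qed.

Lemma Q_deriv n x : is_derive (Q n) x (- (3 * cos x * sin x) * P n x).
Proof.
  unfold P. rewrite <- (sum_n_m_mult_l (K := R_Ring)).
  apply is_derive_sum_n_m. intros k hk. now apply is_derive_ck2_div_sigmak3.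
Qed.

Lemma K_deriv n x : - (PI / 2) < x < PI / 2 -> is_derive (K n) x (sin x * M n x).
Proof.
  intros hx. pose proof (cos_gt_0 x (proj1 hx) (proj2 hx)).
  assert (hS : is_derive (fun y => Sn n / cos y ^ 2) x (2 * Sn n * sin x / cos x ^ 3)).
  { auto_derive; [nra|]. field. lra. }
  assert (hcQ := Derive.is_derive_mult _ _ _ _ _ (is_derive_cos x) (Q_deriv n x)).
  replace (sin x * M n x) with
    (/ 4 * (2 * Sn n * sin x / cos x ^ 3
            - (- sin x * Q n x + cos x * (- (3 * cos x * sin x) * P n x)))).
  - apply (is_derive_scal _ _ (/ 4)).
    exact (@is_derive_minus R_AbsRing R_NormedModule _ _ _ _ _ hS hcQ).
  - unfold M. field. lra.
Qed.

Lemma K_even n y : K n (- y) = K n y.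
Proof.
  unfold K, Q, sigmak. rewrite cos_neg. reflexivity.
Qed.

Lemma lk_bounds n k : (1 <= k <= n - 1)%nat ->
  PI / INR n <= lk n k <= PI - PI / INR n.
Proof.
  intros [h1 h2]. assert (h3 : (k + 1 <= n)%nat) by lia.
  apply (le_INR 1) in h1. apply le_INR in h3. rewrite plus_INR in h3. simpl in h1, h3.
  pose proof PI_RGT_0.
  assert (hu : 0 < PI / INR n) by (apply Rdiv_lt_0_compat; lra).
  assert (hPI : PI = PI / INR n * INR n) by (field; lra).
  replace (lk n k) with (PI / INR n * INR k) by (unfold lk; field; lra).
  set (u := PI / INR n) in *. split; nra.
Qed.

Lemma Sn_ge n : (2 <= n)%nat -> INR n - 1 <= Sn n.
Proof.
  intros h. pose proof (INR_ge_2 n h). pose proof PI_RGT_0. unfold Sn.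
  apply Rle_trans with (sum_n_m (fun _ => 1) 1 (n - 1)).
  - rewrite sum_n_m_const. replace (S (n - 1) - 1)%nat with (n - 1)%nat by lia.
    rewrite minus_INR by lia. simpl. lra.
  - apply sum_n_m_le_loc. intros k hk. pose proof (lk_bounds n k hk).
    assert (0 < PI / INR n) by (apply Rdiv_lt_0_compat; lra).
    assert (0 < sin (lk n k)) by (apply sin_gt_0; lra).
    pose proof (SIN_bound (lk n k)).
    rewrite <- Rinv_1. apply Rinv_le_contravar; lra.
Qed.

Lemma Sn_le n : (2 <= n)%nat -> Sn n <= (INR n - 1) / sin (PI / INR n).
Proof.
  intros h. pose proof (INR_ge_2 n h). pose proof PI_RGT_0. unfold Sn.
  assert (hpn : 0 < PI / INR n <= PI / 2).
  { split; [apply Rdiv_lt_0_compat; lra|].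
    apply Rmult_le_compat_l; [lra|]. apply Rinv_le_contravar; lra. }
  assert (hs : 0 < sin (PI / INR n)) by (apply sin_gt_0; lra).
  apply Rle_trans with (sum_n_m (fun _ => / sin (PI / INR n)) 1 (n - 1)).
  - apply sum_n_m_le_loc. intros k hk. pose proof (lk_bounds n k hk).
    apply Rinv_le_contravar; [exact hs|].
    destruct (Rle_or_lt (lk n k) (PI / 2)).
    + apply sin_incr_1; lra.
    + rewrite <- (sin_PI_x (lk n k)). apply sin_incr_1; lra.
  - rewrite sum_n_m_const. replace (S (n - 1) - 1)%nat with (n - 1)%nat by lia.
    rewrite minus_INR by lia. simpl. unfold Rdiv. lra.
Qed.

Lemma ck_sq_half_angle n k : INR n <> 0 ->
  ck n k ^ 2 = / 2 + / 2 * cos ((2 * INR k - 1) * (PI / INR n)).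
Proof.
  intros hn. unfold ck.
  replace ((2 * INR k - 1) * (PI / INR n)) with (2 * (PI * (2 * INR k - 1) / (2 * INR n)))
    by (field; exact hn).
  rewrite cos_2a_cos. field.
Qed.

Lemma sum_ck_sq n : (2 <= n)%nat -> sum_n_m (fun k => ck n k ^ 2) 1 n = INR n / 2.
Proof.
  intros h. pose proof (INR_ge_2 n h). pose proof PI_RGT_0.
  assert (hs : 0 < sin (PI / INR n)).
  { apply sin_gt_0; [apply Rdiv_lt_0_compat; lra|].
    apply Rmult_lt_reg_r with (INR n); [lra|]. field_simplify; nra. }
  assert (hcos : sum_n_m (fun k => cos ((2 * INR k - 1) * (PI / INR n))) 1 n = 0).
  { pose proof (sum_cos_odd_multiples (PI / INR n) n) as e.
    replace (2 * INR n * (PI / INR n)) with (2 * PI) in e by (field; lra).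
    rewrite sin_2PI in e. apply Rmult_integral in e. destruct e; [lra | assumption]. }
  rewrite (sum_n_m_ext_loc _ (fun k => / 2 + / 2 * cos ((2 * INR k - 1) * (PI / INR n)))).
  - rewrite (sum_n_m_plus (G := R_AbelianMonoid)), (sum_n_m_mult_l (K := R_Ring)).
    change (sum_n_m (fun _ => / 2) 1 n
      + / 2 * sum_n_m (fun k => cos ((2 * INR k - 1) * (PI / INR n))) 1 n = INR n / 2).
    rewrite hcos, sum_n_m_const. replace (S n - 1)%nat with n by lia. field.
  - intros k _. apply ck_sq_half_angle. lra.
Qed.

Lemma Q_ge_first_term n y : (1 <= n)%nat -> ck n 1 ^ 2 / sigmak n 1 y ^ 3 <= Q n y.
Proof.
  intros h. unfold Q. rewrite sum_Sn_m by exact h.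
  change (ck n 1 ^ 2 / sigmak n 1 y ^ 3 <=
    ck n 1 ^ 2 / sigmak n 1 y ^ 3 + sum_n_m (fun k => ck n k ^ 2 / sigmak n k y ^ 3) 2 n).
  enough (0 <= sum_n_m (fun k => ck n k ^ 2 / sigmak n k y ^ 3) 2 n) by lra.
  apply sum_n_m_nonneg. intros k hk. pose proof (sigmak_pos n k y ltac:(lia)).
  apply Rdiv_le_0_compat; [apply pow2_ge_0 | now apply pow_lt].
Qed.

Lemma M_pos n y : (2 <= n)%nat -> - (PI / 2) < y < PI / 2 -> 0 < M n y.
Proof.
  intros h hy. pose proof (cos_gt_0 y (proj1 hy) (proj2 hy)).
  pose proof (Sn_ge n h). pose proof (INR_ge_2 n h).
  assert (hQ : 0 <= Q n y).
  { eapply Rle_trans; [|apply Q_ge_first_term; lia].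
    pose proof (sigmak_pos n 1 y ltac:(lia)).
    apply Rdiv_le_0_compat; [apply pow2_ge_0 | now apply pow_lt]. }
  assert (hP : 0 <= P n y).
  { apply sum_n_m_nonneg. intros k hk. pose proof (sigmak_pos n k y hk).
    apply Rdiv_le_0_compat; [|now apply pow_lt].
    replace (ck n k ^ 4) with ((ck n k ^ 2) ^ 2) by ring. apply pow2_ge_0. }
  assert (0 < 2 * Sn n / cos y ^ 3) by (apply Rdiv_lt_0_compat; [lra | now apply pow_lt]).
  assert (0 <= 3 * cos y ^ 2 * P n y) by (apply Rmult_le_pos; nra).
  unfold M. lra.
Qed.

Lemma cos_PI4_sq : cos (PI / 4) ^ 2 = / 2.
Proof.
  rewrite cos_PI4. pose proof (sqrt_lt_R0 2 ltac:(lra)).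
  field_simplify; [|lra]. rewrite pow2_sqrt by lra. field.
Qed.

Lemma ck_1_eq n : (1 <= n)%nat -> ck n 1 = cos (PI / (2 * INR n)).
Proof.
  intros h. apply (le_INR 1) in h. simpl in h.
  unfold ck. simpl INR. f_equal. field. lra.
Qed.

Lemma K_at_0_neg n : (2 <= n)%nat -> K n 0 < 0.
Proof.
  intros h. pose proof (INR_ge_2 n h). pose proof PI_RGT_0. pose proof PI_lt_32_10.
  set (th := PI / (2 * INR n)).
  assert (hth : th * (2 * INR n) = PI) by (unfold th; field; lra).
  assert (hth0 : 0 < th) by (unfold th; apply Rdiv_lt_0_compat; lra).
  assert (hth4 : th <= PI / 4) by nra.
  set (s := sin th). set (c := cos th).
  assert (hs : 0 < s < th) by (split; [apply sin_gt_0 | apply sin_lt_x]; lra).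
  assert (hc : 0 < c) by (apply cos_gt_0; lra).
  assert (hsc : s ^ 2 + c ^ 2 = 1).
  { pose proof (sin2_cos2 th) as e. fold s c in e. unfold Rsqr in e. lra. }
  assert (hc7 : 7 / 10 <= c).
  { assert (cos (PI / 4) <= c) by (apply cos_decr_1; lra).
    assert (0 < cos (PI / 4)) by (apply cos_gt_0; lra).
    pose proof cos_PI4_sq. nra. }
  assert (hS : Sn n <= (INR n - 1) / (2 * s * c)).
  { replace (2 * s * c) with (sin (PI / INR n)).
    - now apply Sn_le.
    - unfold s, c. rewrite <- sin_2a. unfold th. f_equal. field. lra. }
  assert (hQ : c ^ 2 / s ^ 3 <= Q n 0).
  { replace c with (ck n 1) by (apply ck_1_eq; lia).
    replace s with (sigmak n 1 0); [apply Q_ge_first_term; lia|].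
    unfold sigmak. rewrite ck_1_eq, cos_0 by lia. fold th c.
    replace (1 - c ^ 2 * 1 ^ 2) with (s ^ 2) by lra. apply sqrt_pow2. lra. }
  (* (n - 1) s^2 < (n - 1) th^2 <= pi^2 / 16 < 0.64 < 2 c^3 *)
  assert (key : (INR n - 1) * s ^ 2 < 2 * c ^ 3).
  { assert (16 * ((INR n - 1) * th ^ 2) <= PI ^ 2) by (rewrite <- hth; nra).
    assert ((INR n - 1) * s ^ 2 <= (INR n - 1) * th ^ 2) by (apply Rmult_le_compat_l; nra).
    nra. }
  assert (hSQ : Sn n < Q n 0).
  { apply Rle_lt_trans with ((INR n - 1) / (2 * s * c)); [exact hS|].
    apply Rlt_le_trans with (c ^ 2 / s ^ 3); [|exact hQ].
    assert (0 < s ^ 3) by (apply pow_lt; lra).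
    apply Rmult_lt_reg_r with (2 * s ^ 3 * c); [nra|].
    replace ((INR n - 1) / (2 * s * c) * (2 * s ^ 3 * c)) with ((INR n - 1) * s ^ 2)
      by (field; lra).
    replace (c ^ 2 / s ^ 3 * (2 * s ^ 3 * c)) with (2 * c ^ 3) by (field; lra).
    exact key. }
  unfold K. rewrite cos_0. lra.
Qed.

Lemma cos_PI4_div_sigmak_cube_lt n k : (1 <= k <= n)%nat ->
  cos (PI / 4) / sigmak n k (PI / 4) ^ 3 < 2.
Proof.
  intros hk. pose proof PI_RGT_0. pose proof cos_PI4_sq as hu2.
  assert (hu : 0 < cos (PI / 4)) by (apply cos_gt_0; lra).
  pose proof (sigmak_pos n k (PI / 4) hk) as hs.
  pose proof (sigmak_radicand_pos n k 0 hk) as hc. rewrite cos_0 in hc.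
  assert (hs2 : sigmak n k (PI / 4) ^ 2 = 1 - ck n k ^ 2 / 2).
  { unfold sigmak. rewrite pow2_sqrt, hu2; [field|]. rewrite hu2. lra. }
  set (u := cos (PI / 4)) in *. set (sg := sigmak n k (PI / 4)) in *.
  assert (u < sg) by nra.
  assert (u ^ 3 < sg ^ 3) by (simpl; nra).
  apply Rmult_lt_reg_r with (sg ^ 3); [now apply pow_lt|].
  unfold Rdiv. rewrite Rmult_assoc, Rinv_l by (apply pow_nonzero; lra). nra.
Qed.

Lemma K_at_PI4_pos n : (2 <= n)%nat -> 0 < K n (PI / 4).
Proof.
  intros h. pose proof (INR_ge_2 n h). pose proof (Sn_ge n h). pose proof PI_RGT_0.
  assert (hterm : forall k, cos (PI / 4) * (ck n k ^ 2 / sigmak n k (PI / 4) ^ 3) =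
    ck n k ^ 2 * (cos (PI / 4) / sigmak n k (PI / 4) ^ 3)) by (intros; unfold Rdiv; ring).
  assert (hck1 : 0 < ck n 1 ^ 2).
  { rewrite ck_1_eq by lia. apply pow_lt, cos_gt_0.
    - assert (0 < PI / (2 * INR n)) by (apply Rdiv_lt_0_compat; lra). lra.
    - apply Rmult_lt_reg_r with (2 * INR n); [lra|]. field_simplify; nra. }
  assert (hsum : sum_n_m (fun k => 2 * ck n k ^ 2) 1 n = INR n).
  { rewrite (sum_n_m_mult_l (K := R_Ring)).
    change (2 * sum_n_m (fun k => ck n k ^ 2) 1 n = INR n).
    rewrite sum_ck_sq by exact h. field. }
  assert (hQ : cos (PI / 4) * Q n (PI / 4) < INR n).
  { rewrite <- hsum. unfold Q. rewrite <- (sum_n_m_mult_l (K := R_Ring)).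
    apply sum_n_m_lt_loc; [lia| |].
    - intros k hk. pose proof (cos_PI4_div_sigmak_cube_lt n k hk).
      change (mult ?a ?b) with (a * b). rewrite hterm, Rmult_comm.
      apply Rmult_le_compat_r; [apply pow2_ge_0 | lra].
    - pose proof (cos_PI4_div_sigmak_cube_lt n 1 ltac:(lia)).
      change (mult ?a ?b) with (a * b). rewrite hterm, Rmult_comm.
      now apply Rmult_lt_compat_r. }
  unfold K. rewrite cos_PI4_sq. replace (Sn n / / 2) with (2 * Sn n) by field. lra.
Qed.

Theorem lemma5p3 (n : nat) (hn : (2 <= n)%nat) :
  exists phiR : R,
    0 < phiR < PI / 4 /\
    (forall phi : R, - (PI / 2) < phi < PI / 2 ->
       (critical_point (V n) phi <-> (phi = - phiR \/ phi = 0 \/ phi = phiR))) /\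
    nondegenerate (V n) (- phiR) /\ nondegenerate (V n) 0 /\ nondegenerate (V n) phiR.
Proof.
  apply (three_nondegenerate_critical_points (V n) (K n) (M n)).
  - apply V_deriv.
  - apply K_deriv.
  - intros x hx. now apply M_pos.
  - apply K_even.
  - pose proof PI_RGT_0. lra.
  - now apply K_at_0_neg.
  - now apply K_at_PI4_pos.
Qed.
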